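(* Let $\ell,d$ be positive integers and $p=p_1\cdots p_\ell\in\mathbb{Z}_d^\ell$. The descending dipaths of the cyclic permutation routing $R(p_1\cdots p_\ell)$ in $\mathcal{B}(\ell,d)$ are pairwise arc-disjoint: no arc of $\mathcal{B}(\ell,d)$ is contained in two of them.
   Context: The BCube $\mathcal{B}(\ell,d)$ ($\ell,d$ positive integers) is the symmetric digraph defined as follows, with $\mathbb{Z}_d=\{0,1,\dots,d-1\}$. - Hosts: all vectors $\mathbf{h}=h_1\cdots h_\ell\in\mathbb{Z}_d^{\ell}$. - Switches: for each layer $k\in\{1,\dots,\ell\}$, one switch $\mathbf{s}^k$ for each vector $s^k_1\cdots s^k_{\ell-1}\in\mathbb{Z}_d^{\ell-1}$. - Links: host $\mathbf{h}$ and layer-$k$ switch $\mathbf{s}^k$ are joined if and only if $s^k_1\cdots s^k_{\ell-1}=h_1\cdots h_{k-1}h_{k+1}\cdots h_\ell$. Each such link gives an uplink arc (host $\to$ switch) and a downlink arc (switch $\to$ host) at layer $k$. Descending dipath: let $\mathbf{h}^s\neq\mathbf{h}^d$ be hosts, and let $i_1>\dots>i_m$ be the coordinates in which they differ. Define $\mathbf{h}^0=\mathbf{h}^s$, and let $\mathbf{h}^j$ be $\mathbf{h}^{j-1}$ with its $i_j$-th coordinate replaced by $h^d_{i_j}$. The descending dipath goes, for each $j=1,\dots,m$, from $\mathbf{h}^{j-1}$ through the unique layer-$i_j$ switch adjacent to both $\mathbf{h}^{j-1}$ and $\mathbf{h}^j$, to $\mathbf{h}^j$. When $\mathbf{h}^s=\mathbf{h}^d$,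 the dipath is the trivial path with no arcs. For $p\in\mathbb{Z}_d^\ell$, the permutation $P(p)$ is the set of pairs $(\mathbf{h}^s,\mathbf{h}^d)$ with $\mathbf{h}^s\in\mathbb{Z}_d^\ell$ and $h^d_i=(h^s_i+p_i)\bmod d$ for all $i$. The cyclic permutation routing $R(p)$ is the set of descending dipaths $P_{\mathbf{h}^s,\mathbf{h}^d}$ for $(\mathbf{h}^s,\mathbf{h}^d)\in P(p)$. *)

(* BCube B(l,d): coordinates indexed by 'I_l (0-based:
   paper coordinate i corresponds to ordinal i-1), Z_d is 'I_d. *)
From mathcomp Require Import all_boot.
Set Implicit Arguments. Unset Strict Implicit. Unset Printing Implicit Defensive.

Definition host (l d : nat) := {ffun 'I_l -> 'I_d}.

Definition switch (l d : nat) := ('I_l * {ffun 'I_l.-1 -> 'I_d})%type.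

Definition bc_arc (l d : nat) := ((host l d * switch l d) + (switch l d * host l d))%type.
Definition uplink l d (h : host l d) (s : switch l d) : bc_arc l d := inl (h, s).
Definition downlink l d (s : switch l d) (h : host l d) : bc_arc l d := inr (s, h).

Lemma bump_lt l (k : 'I_l) (j : 'I_l.-1) : bump k j < l.
Proof.
case: l k j => [[]//|n] k j /=. rewrite /bump.
case: (k <= j); rewrite ?add1n ?add0n /= ?ltnS; [exact: ltn_ord | exact: ltnW].
Qed.

Definition delete_coord l d (k : 'I_l) (h : host l d) : {ffun 'I_l.-1 -> 'I_d} :=
  [ffun j => h (Ordinal (bump_lt k j))].

Definition linked l d (h : host l d) (s : switch l d) : Prop :=
  s.2 = delete_coord s.1 h.

Definition is_arc l d (a : bc_arc l d) : Prop :=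
  match a with
  | inl (h, s) => linked h s
  | inr (s, h) => linked h s
  end.

Definition set_coord l d (h hd : host l d) (i : 'I_l) : host l d :=
  [ffun j => if j == i then hd j else h j].

(* the switch of layer i adjacent to h (and to set_coord h hd i) *)
Definition layer_switch l d (i : 'I_l) (h : host l d) : switch l d :=
  (i, delete_coord i h).

Fixpoint dpath_aux l d (hd h : host l d) (cs : seq 'I_l) : seq (bc_arc l d) :=
  match cs with
  | [::] => [::]
  | i :: cs' =>
      let h' := set_coord h hd i in
      uplink h (layer_switch i h) :: downlink (layer_switch i h) h'
        :: dpath_aux hd h' cs'
  end.

Definition diff_coords l d (hs hd : host l d) : seq 'I_l :=
  [seq i <- rev (enum 'I_l) | hs i != hd i].

Definition descending_dipath l d (hs hd : host l d) : seq (bc_arc l d) :=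
  dpath_aux hd hs (diff_coords hs hd).

Definition cyc_dest l d (p hs : host l d) (hd : host l d) : Prop :=
  forall i, val (hd i) = (val (hs i) + val (p i)) %% d.

From mathcomp Require Import all_boot.
From mathcomp Require Import zify.

Set Implicit Arguments.
Unset Strict Implicit.
Unset Printing Implicit Defensive.

(* Since coordinates are corrected in decreasing order, every host visited by
   the descending dipath from hs to hd agrees with hd on a top segment of
   coordinates and with hs below it, and the layer of each arc's switch tells
   where the segment starts. Two dipaths sharing an arc therefore pass through
   a common host of this form with the same split point, so at each coordinate
   either their sources or their destinations agree. Under a cyclic
   permutation the destination coordinate determines the source coordinate
   and conversely, so the two pairs coincide. *)

Section DescendingDipath.
Variables l d : nat.
Implicit Types (hs hd h : host l d) (i k : 'I_l) (n : nat).

Definition splice hs hd n : host l d :=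
  [ffun k : 'I_l => if k < n then hs k else hd k].

Lemma splice_ge hs hd n : l <= n -> splice hs hd n = hs.
Proof. by move=> ln; apply/ffunP => k; rewrite ffunE (leq_trans (ltn_ord k)). Qed.

Lemma splice_stable hs hd m n : m <= n ->
  (forall k, m <= k < n -> hs k = hd k) -> splice hs hd n = splice hs hd m.
Proof.
move=> mn eq_mn; apply/ffunP => k; rewrite !ffunE.
case: (ltnP k m) => [km|mk]; first by rewrite (leq_trans km mn).
by case: ltnP => // kn; rewrite eq_mn ?mk.
Qed.

Lemma set_coord_splice hs hd i :
  set_coord (splice hs hd i.+1) hd i = splice hs hd i.
Proof.
apply/ffunP => k; rewrite !ffunE ltnS leq_eqVlt val_eqE.
by case: eqP => [->|]; rewrite ?ltnn.
Qed.

Definition descent_arc hs hd i (a : bc_arc l d) : Prop :=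
  let h := splice hs hd i.+1 in
  a = uplink h (layer_switch i h) \/ a = downlink (layer_switch i h) (splice hs hd i).

Lemma mem_dpath_aux hs hd n (cs : seq 'I_l) a :
  sorted (fun i j : 'I_l => j < i) cs -> all (fun i : 'I_l => i < n) cs ->
  (forall k, k < n -> hs k != hd k -> k \in cs) ->
  a \in dpath_aux hd (splice hs hd n) cs -> exists i, descent_arc hs hd i a.
Proof.
elim: cs n => [|i cs IH] //= n cs_sorted /andP[i_n cs_n] diff_cs.
have cs_i : all (fun j : 'I_l => j < i) cs.
  by apply: (order_path_min _ cs_sorted) => x y z /=; lia.
have split_i : splice hs hd n = splice hs hd i.+1.
  apply: splice_stable => // k /andP[ik kn]; apply/eqP/negPn/negP => /(diff_cs k kn).
  rewrite inE => /orP[/eqP ki|k_cs]; first by rewrite ki ltnn in ik.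
  by move: (allP cs_i k k_cs) => /=; lia.
rewrite split_i set_coord_splice !inE => /orP[/eqP->|/orP[/eqP->|a_cs]].
- by exists i; left.
- by exists i; right.
apply: IH a_cs => //; first exact: path_sorted cs_sorted.
move=> k ki /(diff_cs k (ltn_trans ki i_n)); rewrite inE => /orP[/eqP ik|//].
by rewrite ik ltnn in ki.
Qed.

Lemma mem_descending_dipath hs hd a :
  a \in descending_dipath hs hd -> exists i, descent_arc hs hd i a.
Proof.
rewrite /descending_dipath -[X in dpath_aux _ X](splice_ge hs hd (leqnn l)).
apply: mem_dpath_aux => [||k _ diff_k].
- apply: sorted_filter; first by move=> x y z /=; lia.
  rewrite rev_sorted; have := iota_ltn_sorted 0 l.
  by rewrite -val_enum_ord sorted_map; apply: sub_sorted.
- by apply/allP => k _ /=.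
- by rewrite mem_filter mem_rev mem_enum diff_k.
Qed.

Lemma descent_arc_common_host hs1 hd1 hs2 hd2 i1 i2 a :
  descent_arc hs1 hd1 i1 a -> descent_arc hs2 hd2 i2 a ->
  exists n, splice hs1 hd1 n = splice hs2 hd2 n.
Proof.
case=> -> [] // [].
- by move=> h12 i12 _; exists i1.+1; rewrite h12 i12.
- by move=> i12 _ h12; exists i1; rewrite h12 i12.
Qed.

End DescendingDipath.

Lemma cyc_dest_coordE l d (p hs1 hd1 hs2 hd2 : host l d) k :
  cyc_dest p hs1 hd1 -> cyc_dest p hs2 hd2 -> (hd1 k == hd2 k) = (hs1 k == hs2 k).
Proof.
by move=> C1 C2; rewrite -val_eqE /= C1 C2 eqn_modDr !modn_small ?ltn_ord.
Qed.

Lemma splice_cyc_dest_eq l d (p hs1 hd1 hs2 hd2 : host l d) n :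
  cyc_dest p hs1 hd1 -> cyc_dest p hs2 hd2 ->
  splice hs1 hd1 n = splice hs2 hd2 n -> (hs1, hd1) = (hs2, hd2).
Proof.
move=> C1 C2 /ffunP eq12.
have hs12 : hs1 = hs2.
  apply/ffunP => k; apply/eqP; move: (eq12 k); rewrite !ffunE.
  case: ifP => _ eq_k; first by rewrite eq_k.
  by rewrite -(cyc_dest_coordE k C1 C2) eq_k.
congr pair => //; apply/ffunP => k; apply/eqP.
by rewrite (cyc_dest_coordE k C1 C2) hs12.
Qed.

Theorem lemma3 (l d : nat) (hl : 0 < l) (hdp : 0 < d) (p : host l d)
  (hs1 hd1 hs2 hd2 : host l d) :
  cyc_dest p hs1 hd1 -> cyc_dest p hs2 hd2 ->
  (hs1, hd1) <> (hs2, hd2) ->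
  forall a : bc_arc l d, is_arc a ->
    ~ (a \in descending_dipath hs1 hd1 /\ a \in descending_dipath hs2 hd2).
Proof.
move=> C1 C2 neq12 a _ [/mem_descending_dipath[i1 a1] /mem_descending_dipath[i2 a2]].
have [n splice12] := descent_arc_common_host a1 a2.
exact/neq12/(splice_cyc_dest_eq C1 C2 splice12).
Qed.
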